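(* Consider the information processing system below operated under an arbitrary inspection policy. Fix a job index $i\in\mathbb{N}$ and $x>0$. Let $S^F_i(h,l)$ and $\widehat H^F_i$ denote the values of $S_{i,t}(h,l)$ and $\widehat H_{i,t}$ at the time job $i$ departs from the system, and let $$\mathcal{G}_x=\{\exists h'\in\mathcal{H}\text{ such that } S^F_i(h',l)\ge x\ \ \forall l\in\mathcal{H},\,l\neq h'\}.$$ Then for all $h\in\mathcal{H}$, $$\mathbb{P}(\widehat H^F_i\neq h,\ \mathcal{G}_x\mid H_i=h)\le c_\mathcal{H}\exp(-x).$$
   Context: Model: jobs arrive by a rate-1 Poisson process; job $i$ has a hidden label $H_i$ in a finite set $\mathcal{H}$ with $|\mathcal{H}|=c_\mathcal{H}$, i.i.d. with a prior $\pi$ having positive entries. There are finitely many experts, each with a type $k$ in a finite set $\mathcal{K}$; a type-$k$ expert's inspection lasts an independent exponential time of mean $1/\mu_k$ and its outcome, if it is the $j$-th inspection of job $i$, is $X_{i,j}\in\mathcal{X}$ ($\mathcal{X}$ finite) with law $p(H_i,k,\cdot)$, independent of everything else. An inspection policy may, using all past history, assign idle experts to jobs and let jobs depart with a classification. Let $N_{i,t}$ be the number of inspections job $i$ has received (completed) by time $t$, $K_{i,j}$ the type of the expert performing its $j$-th inspection, and $$S_{i,t}(h,l)=\sum_{j=1}^{N_{i,t}}\ln\frac{p(h,K_{i,j},X_{i,j})}{p(l,K_{i,j},X_{i,j})},\qquad h,l\in\mathcal{H}.$$ $\widehat H_{i,t}$ is the maximum-likelihood estimator $\widehat H_{i,t}\in\arg\max_{h\in\mathcal{H}}\prod_{j=1}^{N_{i,t}}p(h,K_{i,j},X_{i,j})$,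 ties broken arbitrarily. *)

From mathcomp Require Import all_boot all_order all_algebra.
From mathcomp Require Import all_classical all_reals all_analysis.
Set Implicit Arguments.
Unset Strict Implicit.
Unset Printing Implicit Defensive.
Import Order.TTheory GRing.Theory Num.Theory.
Local Open Scope ring_scope.

(* hT : finite label set H, kT : finite set K of expert types,
   xT : finite outcome set X,  p h k x = p(h,k,x).

   A history of job i is the sequence of its completed inspections
   [:: (K_{i,1}, X_{i,1}); ...; (K_{i,n}, X_{i,n})].

   All randomness of the system other than H_i and job i's inspection
   outcomes (other jobs' labels and outcomes, Poisson arrival times,
   exponential inspection durations, any randomisation of the policy) is
   collected in an element w of a general probability space (Om, P0),
   independent of H_i and of job i's outcomes.  Given w and the outcomes of
   job i revealed so far, an (arbitrary, history dependent) inspection policy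
   determines deterministically what happens next to job i:
     dec w s = Some k : the next completed inspection of job i is by a
                        type-k expert,
     dec w s = None   : job i departs with history s;
   and est w s is the classification (an ML estimate, ties broken
   arbitrarily) attached at departure. *)

Section System.
Variables (R : realType) (hT kT xT : finType).
Variable p : hT -> kT -> xT -> R.

Definition llr (s : seq (kT * xT)) (h l : hT) : R :=
  \sum_(kx <- s) ln (p h kx.1 kx.2 / p l kx.1 kx.2).

Definition lik (s : seq (kT * xT)) (h : hT) : R :=
  \prod_(kx <- s) p h kx.1 kx.2.

Definition is_ML (s : seq (kT * xT)) (h : hT) : Prop :=
  forall h', lik s h' <= lik s h.

Definition G_event (x : R) (s : seq (kT * xT)) : bool :=
  [exists h' : hT, [forall l : hT, (l != h') ==> (x <= llr s h' l)]].

(* Probability, given H_i = h and the external randomness fixed by the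
   policy decisions dec, that the inspections of job i complete in order
   along the (whole) history s appended to pre: each next inspection type is
   the one chosen by the policy, and each outcome has law p(h, k, .). *)
Fixpoint path_weight (dec : seq (kT * xT) -> option kT) (h : hT)
    (pre s : seq (kT * xT)) : R :=
  match s with
  | [::] => 1
  | kx :: s' =>
      ((dec pre == Some kx.1)%:R * p h kx.1 kx.2) *
      path_weight dec h (rcons pre kx) s'
  end.

(* P(job i departs, hat H^F_i <> h, G_x | H_i = h) *)
Definition prob_wrong_G (d : measure_display) (Om : measurableType d)
    (P0 : probability Om R) (dec : Om -> seq (kT * xT) -> option kT)
    (est : Om -> seq (kT * xT) -> hT) (x : R) (h : hT) : \bar R :=
  (\int[P0]_w
    (\sum_(0 <= n <oo)
       (\sum_(s : n.-tuple (kT * xT))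
          (path_weight (dec w) h [::] s * (dec w s == None)%:R
           * ((est w s != h) && G_event x s)%:R))%:E))%E.

End System.

From mathcomp Require Import all_boot all_order all_algebra.
From mathcomp Require Import all_classical all_reals all_analysis.
From mathcomp Require Import measurable_realfun ring.
Set Implicit Arguments.
Unset Strict Implicit.
Unset Printing Implicit Defensive.
Import Order.TTheory GRing.Theory Num.Theory.
Local Open Scope ring_scope.

(* Change of measure.  Once the external randomness w is fixed, the weight of
   a departure history s under label h factors as a 0/1 indicator (s follows
   the policy) times the likelihood lik s h.  On G_x the witness h' must be the
   ML estimate e (otherwise llr s h' e >= x > 0 contradicts maximality of e),
   so for e <> h we get lik s h <= e^{-x} lik s e.  Hence the error weight of s
   is at most e^{-x} times its departure weight under the label e, and summing
   over s and over the possible values of e bounds the error probability by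
   e^{-x} times a sum of c_H departure probabilities, each at most 1. *)

Section TupleSums.
Variables (V : nmodType) (T : finType).

Lemma big_tuple0 (F : 0.-tuple T -> V) : \sum_(s : 0.-tuple T) F s = F [tuple].
Proof. by rewrite (big_pred1 [tuple]) // => s; apply/esym/eqP/tuple0. Qed.

Lemma big_tuple_cons n (F : n.+1.-tuple T -> V) :
  \sum_(s : n.+1.-tuple T) F s =
  \sum_(t : T) \sum_(s : n.-tuple T) F [tuple of t :: s].
Proof.
rewrite pair_big /= (reindex (fun q : T * n.-tuple T => [tuple of q.1 :: q.2])) //.
exists (fun u : n.+1.-tuple T => (thead u, [tuple of behead u])).
- by move=> [t s] _ /=; congr pair; apply: val_inj.
- by move=> u _; rewrite [RHS]tuple_eta.
Qed.

End TupleSums.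

Section Likelihood.
Variables (R : realType) (hT kT xT : finType) (p : hT -> kT -> xT -> R).
Hypothesis p_pos : forall h k y, 0 < p h k y.

Fixpoint follows_policy (D : seq (kT * xT) -> option kT) pre s : bool :=
  if s is kx :: s' then (D pre == Some kx.1) && follows_policy D (rcons pre kx) s'
  else true.

Lemma path_weightE D h pre s :
  path_weight p D h pre s = (follows_policy D pre s)%:R * lik p s h.
Proof.
elim: s pre => [|kx s IH] pre /=; first by rewrite /lik big_nil mulr1.
by rewrite IH /lik big_cons -mulnb natrM; ring.
Qed.

Lemma lik_gt0 s h : 0 < lik p s h.
Proof. by rewrite /lik prodr_gt0. Qed.

Lemma path_weight_ge0 D h pre s : 0 <= path_weight p D h pre s.
Proof. by rewrite path_weightE mulr_ge0 // ltW // lik_gt0. Qed.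

Lemma llrE s h l : llr p s h l = ln (lik p s h / lik p s l).
Proof.
elim: s => [|kx s IH]; first by rewrite /llr /lik !big_nil divr1 ln1.
rewrite /llr /lik !big_cons -/(llr p s h l) -/(lik p s h) -/(lik p s l) IH.
by rewrite -lnM ?posrE ?divr_gt0 ?lik_gt0 // invfM mulrACA.
Qed.

Lemma lik_le_expRN_llr x s e h :
  x <= llr p s e h -> lik p s h <= expR (- x) * lik p s e.
Proof.
rewrite llrE -ler_expR lnK ?posrE ?divr_gt0 ?lik_gt0 //.
by rewrite ler_pdivlMr ?lik_gt0 // expRN ler_pdivlMl ?expR_gt0 // mulrC.
Qed.

Lemma G_event_ML x s e :
  0 < x -> is_ML p s e -> G_event p x s ->
  forall l, l != e -> x <= llr p s e l.
Proof.
move=> x_pos e_ML /existsP[h' /forallP G_h'].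
suff -> : e = h' by move=> l /(implyP (G_h' l)).
apply/eqP/negPn/negP => e_h'; have := implyP (G_h' e) e_h'.
rewrite llrE; apply/negP; rewrite -ltNge (le_lt_trans _ x_pos) //.
by rewrite ln_le0 // ler_pdivrMr ?lik_gt0 // mul1r e_ML.
Qed.

End Likelihood.

Section Departure.
Variables (R : realType) (hT kT xT : finType) (p : hT -> kT -> xT -> R).
Hypothesis p_pos : forall h k y, 0 < p h k y.
Hypothesis p_sum1 : forall h k, \sum_(y : xT) p h k y = 1.
Variable D : seq (kT * xT) -> option kT.

Definition departs_before h N pre :=
  \sum_(0 <= n < N) \sum_(s : n.-tuple (kT * xT))
     path_weight p D h pre s * (D (pre ++ s) == None)%:R.

Definition present_after h N pre :=
  \sum_(s : N.-tuple (kT * xT)) path_weight p D h pre s.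

Lemma departs_before_S h N pre : departs_before h N.+1 pre =
  (D pre == None)%:R + \sum_(t : kT * xT)
    ((D pre == Some t.1)%:R * p h t.1 t.2) * departs_before h N (rcons pre t).
Proof.
rewrite /departs_before big_nat_recl // big_tuple0 /= cats0 mul1r; congr (_ + _).
under eq_bigr do rewrite big_tuple_cons.
rewrite exchange_big /=; apply: eq_bigr => t _.
rewrite big_distrr /=; apply: eq_bigr => n _.
rewrite big_distrr /=; apply: eq_bigr => s _.
by rewrite cat_rcons mulrA.
Qed.

Lemma present_after_S h N pre : present_after h N.+1 pre = \sum_(t : kT * xT)
    ((D pre == Some t.1)%:R * p h t.1 t.2) * present_after h N (rcons pre t).
Proof.
by rewrite /present_after big_tuple_cons; apply: eq_bigr => t _; rewrite big_distrr.
Qed.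

Lemma one_step_mass h pre :
  (D pre == None)%:R +
  \sum_(t : kT * xT) (D pre == Some t.1)%:R * p h t.1 t.2 = 1 :> R.
Proof.
rewrite -(pair_big predT predT (fun k y => (D pre == Some k)%:R * p h k y)) /=.
under eq_bigr do rewrite -big_distrr /= p_sum1 mulr1.
case: (D pre) => [k0|] /=; last by rewrite big1 ?addr0.
rewrite add0r (bigD1 k0) //= eqxx big1 ?addr0 // => k /negbTE k_k0.
by case: eqP => // -[] k_eq; rewrite k_eq eqxx in k_k0.
Qed.

Lemma departs_before_present_after h N pre :
  departs_before h N pre + present_after h N pre = 1.
Proof.
elim: N pre => [|N IH] pre.
  by rewrite /departs_before /present_after big_geq // add0r big_tuple0.
rewrite departs_before_S present_after_S -addrA -big_split /=.
under eq_bigr do rewrite -mulrDr IH mulr1.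
exact: one_step_mass.
Qed.

Lemma departs_before_le1 h N pre : departs_before h N pre <= 1.
Proof.
rewrite -(departs_before_present_after h N pre) lerDl sumr_ge0 // => s _.
exact: path_weight_ge0.
Qed.

Variable E : seq (kT * xT) -> hT.
Hypothesis E_ML : forall s, is_ML p s (E s).
Variables (x : R) (h : hT).
Hypothesis x_pos : 0 < x.

Definition error_weight (s : seq (kT * xT)) :=
  path_weight p D h [::] s * (D s == None)%:R * ((E s != h) && G_event p x s)%:R.

Lemma error_weight_ge0 s : 0 <= error_weight s.
Proof. by rewrite !mulr_ge0 ?path_weight_ge0. Qed.

Lemma error_weight_le s : error_weight s <=
  expR (- x) * \sum_(h' : hT) path_weight p D h' [::] s * (D s == None)%:R.
Proof.
have departure_ge0 h' : 0 <= path_weight p D h' [::] s * (D s == None)%:R.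
  by rewrite mulr_ge0 ?path_weight_ge0.
have sum_ge0 P : 0 <= expR (- x) *
    \sum_(h' | P h') path_weight p D h' [::] s * (D s == None)%:R.
  by rewrite mulr_ge0 ?expR_ge0 ?(sumr_ge0 _ (fun h' _ => departure_ge0 h')).
rewrite /error_weight; case: (boolP (_ && _)) => [/andP[Eh G]|_]; last first.
  by rewrite mulr0 sum_ge0.
rewrite mulr1 (bigD1 (E s)) //= mulrDr ler_wpDr ?sum_ge0 //.
rewrite !path_weightE mulrCA -!mulrA ler_wpM2l // mulrA [_ * expR _]mulrC.
rewrite ler_wpM2r // lik_le_expRN_llr //.
by apply: G_event_ML; rewrite // eq_sym.
Qed.

Lemma sum_error_weight_le N :
  \sum_(0 <= n < N) \sum_(s : n.-tuple (kT * xT)) error_weight s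
  <= #|hT|%:R * expR (- x).
Proof.
apply: le_trans (_ : _ <= \sum_(0 <= n < N) \sum_(s : n.-tuple (kT * xT))
    expR (- x) * \sum_(h' : hT) path_weight p D h' [::] s * (D s == None)%:R) _.
  by apply: ler_sum => n _; apply: ler_sum => s _; exact: error_weight_le.
under eq_bigr do rewrite -big_distrr /=.
rewrite -big_distrr /= mulrC ler_wpM2r ?expR_ge0 //.
under eq_bigr do rewrite exchange_big /=.
rewrite exchange_big /= -sum1_card natr_sum ler_sum // => h' _.
exact: departs_before_le1.
Qed.

End Departure.

Lemma nneseries_le_EFin (R : realType) (u : nat -> R) (c : R) :
  (forall n, 0 <= u n) -> (forall N, \sum_(0 <= n < N) u n <= c) ->
  (\sum_(0 <= n <oo) (u n)%:E <= c%:E)%E.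
Proof.
move=> u_ge0 u_le; apply: lime_le.
  by apply: is_cvg_nneseries => n _ _; rewrite lee_fin.
by apply: nearW => N; rewrite sumEFin lee_fin.
Qed.

Section Measurability.
Local Open Scope classical_set_scope.
Variables (R : realType) (d : measure_display) (Om : measurableType d).

Lemma measurable_fun_natr_bool (b : Om -> bool) :
  measurable [set w | b w] -> measurable_fun setT (fun w => (b w)%:R : R).
Proof.
move=> mb; have -> : (fun w => (b w)%:R) = \1_[set w | b w] :> (Om -> R).
  apply/funext => w; rewrite /indic; case: (boolP (b w)) => bw.
    by rewrite mem_set.
  by rewrite memNset //= => b_true; rewrite b_true in bw.
exact: measurable_indic.
Qed.

Variables (hT kT xT : finType) (p : hT -> kT -> xT -> R).
Variables (dec : Om -> seq (kT * xT) -> option kT) (est : Om -> seq (kT * xT) -> hT).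
Hypothesis dec_meas : forall s o, measurable [set w | dec w s = o].
Hypothesis est_meas : forall s h, measurable [set w | est w s = h].

Lemma measurable_dec_eq s o : measurable_fun setT (fun w => (dec w s == o)%:R : R).
Proof.
apply: measurable_fun_natr_bool.
rewrite (_ : [set w | dec w s == o] = [set w | dec w s = o]) //.
by apply/seteqP; split=> w /eqP.
Qed.

Lemma measurable_path_weight h pre s :
  measurable_fun setT (fun w => path_weight p (dec w) h pre s).
Proof.
elim: s pre => [|kx s IH] pre /=; first exact: measurable_cst.
by apply: measurable_funM => //; apply: measurable_funM;
  [exact: measurable_dec_eq | exact: measurable_cst].
Qed.

Lemma measurable_error_weight x h s :
  measurable_fun setT (fun w => error_weight p (dec w) (est w) x h s).
Proof.
apply: measurable_funM; first by apply: measurable_funM;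
  [exact: measurable_path_weight | exact: measurable_dec_eq].
apply: measurable_fun_natr_bool.
rewrite (_ : [set w | (est w s != h) && G_event p x s] =
    ~` [set w | est w s = h] `&` [set _ | G_event p x s]).
  apply: measurableI; first exact: measurableC.
  by case: (G_event p x s); [rewrite set_true | rewrite set_false].
by apply/seteqP; split=> w; [move=> /andP[/eqP] | move=> [/eqP ? ?]; apply/andP].
Qed.

End Measurability.

Theorem lemma1 (R : realType) (hT kT xT : finType)
  (p : hT -> kT -> xT -> R)
  (p_pos : forall h k y, 0 < p h k y)
  (p_sum1 : forall h k, \sum_(y : xT) p h k y = 1)
  (d : measure_display) (Om : measurableType d) (P0 : probability Om R)
  (dec : Om -> seq (kT * xT) -> option kT)
  (est : Om -> seq (kT * xT) -> hT)
  (dec_meas : forall s o, measurable [set w | dec w s = o])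
  (est_meas : forall s h, measurable [set w | est w s = h])
  (est_ML : forall w s, is_ML p s (est w s))
  (x : R) (x_pos : 0 < x) (h : hT) :
  (prob_wrong_G p P0 dec est x h <= (#|hT|%:R * expR (- x))%:E)%E.
Proof.
pose u w n := \sum_(s : n.-tuple (kT * xT)) error_weight p (dec w) (est w) x h s.
have u_ge0 w n : 0 <= u w n by apply: sumr_ge0 => s _; exact: error_weight_ge0.
have u_meas n : measurable_fun setT (fun w => (u w n)%:E).
  apply/measurable_EFinP; apply: measurable_sum => s.
  exact: measurable_error_weight.
apply: (@le_trans _ _ (\int[P0]_w (cst (#|hT|%:R * expR (- x))%:E) w))%E.
  apply: (@ge0_le_integral _ _ _ _ _ _ (fun w => \sum_(0 <= n <oo) (u w n)%:E)%E) => //.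
  - by move=> w _; apply: (nneseries_ge0 (P := xpredT)) => n _ _; rewrite lee_fin.
  - by apply: (ge0_emeasurable_sum (P := predT)) => // n w _ _; rewrite lee_fin.
  - move=> w _; apply: nneseries_le_EFin => // N.
    exact: sum_error_weight_le.
by rewrite integral_cst //= probability_setT mule1.
Qed.
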